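(* Let $2\le k\le d$ and suppose that dimension $k$ is just rotating after step $N$. Then for all $i\ge N+1$: $\phi(i)\ge\phi(i+1)$, where $\phi(i)=\langle\lambda x^{(i)}_{k-1},x^{(i)}_k\rangle$.
   Context: Fix an integer $R\ge2$ and $\theta_g=\pi/R$. Polar rounding on $\mathbb{C}$: for $z=Ae^{i\theta}$, $[z]=[A]e^{i[\theta]}$, where $[A]$ is a fixed real rounding function of the modulus and $[\theta]$ is the multiple of $\theta_g$ closest to $\theta$ (deterministic tie-breaking). Let $\lambda\in\mathbb{C}$ be algebraic with $|\lambda|=1$, and let $M$ be the $d\times d$ Jordan block with eigenvalue $\lambda$ (so $\lambda$ on the diagonal and $1$ on the superdiagonal). The orbit is $x^{(0)}\in\mathbb{C}^d$ with rounded entries and $x^{(i+1)}=[Mx^{(i)}]$ (componentwise), i.e. $x^{(i+1)}_j=[\lambda x^{(i)}_j+x^{(i)}_{j+1}]$ for $j<d$ and $x^{(i+1)}_d=[\lambda x^{(i)}_d]$. Dimension $k$ is just rotating after position $N$ if $x^{(i+1)}_k=[\lambda x^{(i)}_k]$ for all $i\ge N$. For $a,b\in\mathbb{C}$ (viewed as vectors in $\mathbb{R}^2$), $\langle a,b\rangle\in[0,\pi]$ denotes the smallest angle between $a$ and $b$. *)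

From Stdlib Require Import Reals ZArith List.
From Coquelicot Require Import Coquelicot.
Open Scope R_scope.

(* lam is algebraic: root of a nonzero integer polynomial
   (coefficients listed from degree 0 upwards). *)
Fixpoint Zpoly_eval (p : list Z) (z : C) : C :=
  match p with
  | nil => RtoC 0
  | c :: q => Cplus (RtoC (IZR c)) (Cmult z (Zpoly_eval q z))
  end.

Definition algebraic (z : C) : Prop :=
  exists p : list Z, Exists (fun c => c <> 0%Z) p /\ Zpoly_eval p z = RtoC 0.

(* Principal argument in (-PI, PI]; convention arg 0 = 0. *)
Definition arg (z : C) : R :=
  if Req_EM_T (Cmod z) 0 then 0
  else if Rle_dec 0 (Im z) then acos (Re z / Cmod z)
       else - acos (Re z / Cmod z).

Definition angle_rounding (theta_g : R) (rang : R -> R) : Prop :=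
  forall theta : R,
    (exists m : Z, rang theta = IZR m * theta_g) /\
    (forall m : Z, Rabs (theta - rang theta) <= Rabs (theta - IZR m * theta_g)).

Definition polar_round (rnd rang : R -> R) (z : C) : C :=
  Cmult (RtoC (rnd (Cmod z))) (cos (rang (arg z)), sin (rang (arg z))).

(* smallest angle <a,b> in [0, PI] between a and b viewed in R^2 *)
Definition vangle (a b : C) : R :=
  acos ((Re a * Re b + Im a * Im b) / (Cmod a * Cmod b)).

From Stdlib Require Import Reals ZArith Lra Lia.
From Coquelicot Require Import Coquelicot.
Open Scope R_scope.

(* Write lam = e^(i al), x^(i)_(k-1) = r1 e^(i ga) and x^(i)_k = r2 e^(i be), with ga and be
   on the grid th Z, th = PI / Rg, and let p in [-PI, PI] represent al + ga - be, so that
   phi(i) = |p|.  The rotating entry becomes x^(i+1)_k = [r2 e^(i (al + be))], whose angle is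
   al + be - dl with |dl| <= th / 2, so p - dl lies on the grid.  Rotated by -be, the sum
   lam x^(i)_(k-1) + x^(i)_k = r1 e^(i p) + r2 has an angle u strictly between 0 and p, and
   the grid point c nearest to u stays between 0 and p - dl; hence phi(i+1) = |c + dl| <= |p|. *)

Definition cis (t : R) : C := (cos t, sin t).

Lemma cis_add a b : cis (a + b) = (cis a * cis b)%C.
Proof. unfold cis, Cmult; simpl. rewrite cos_plus, sin_plus. f_equal; ring. Qed.

Lemma cis_congr_add a b t : cis a = cis b -> cis (a + t) = cis (b + t).
Proof. intros E. rewrite !cis_add, E. reflexivity. Qed.

Lemma cis_2PI_mult (k : Z) : cis (IZR k * (2 * PI)) = 1%C.
Proof.
  assert (Hs : sin (IZR k * PI) = 0) by (apply sin_eq_0_1; exists k; reflexivity).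
  replace (IZR k * (2 * PI)) with (2 * (IZR k * PI)) by ring.
  unfold cis. rewrite cos_2a_sin, sin_2a, Hs. unfold RtoC. f_equal; ring.
Qed.

Lemma cis_add_2PI_mult t (k : Z) : cis (t + IZR k * (2 * PI)) = cis t.
Proof. rewrite cis_add, cis_2PI_mult. apply Cmult_1_r. Qed.

Lemma Re_scal_cis r t : Re (RtoC r * cis t)%C = r * cos t.
Proof. apply re_scal_l. Qed.

Lemma Im_scal_cis r t : Im (RtoC r * cis t)%C = r * sin t.
Proof. apply im_scal_l. Qed.

Lemma Cmod_scal_cis r t : 0 <= r -> Cmod (RtoC r * cis t)%C = r.
Proof.
  intros Hr. rewrite Cmod_mult, Cmod_R, Rabs_pos_eq by exact Hr.
  replace (Cmod (cis t)) with 1; [ring|]. symmetry.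
  unfold Cmod, cis, fst, snd. rewrite <- sqrt_1, <- (sin2_cos2 t).
  f_equal. unfold Rsqr. ring.
Qed.

Lemma scal_cis_sum_rotate W om r1 a r2 be :
  (RtoC W * cis om = RtoC r1 * cis a + RtoC r2 * cis be)%C ->
  (RtoC W * cis (om - be) = RtoC r1 * cis (a - be) + RtoC r2)%C.
Proof.
  intros Hsum. unfold Rminus. rewrite !cis_add.
  assert (Hone : (cis be * cis (- be))%C = 1%C).
  { rewrite <- cis_add, Rplus_opp_r. unfold cis. rewrite cos_0, sin_0. reflexivity. }
  transitivity ((RtoC W * cis om) * cis (- be))%C; [ring|].
  rewrite Hsum.
  transitivity (RtoC r1 * (cis a * cis (- be)) + RtoC r2 * (cis be * cis (- be)))%C; [ring|].
  rewrite Hone. ring.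
Qed.

Lemma vangle_scal_cis r1 r2 t1 t2 : 0 < r1 -> 0 < r2 ->
  vangle (RtoC r1 * cis t1)%C (RtoC r2 * cis t2)%C = acos (cos (t1 - t2)).
Proof.
  intros H1 H2. unfold vangle. rewrite !Cmod_scal_cis, !Re_scal_cis, !Im_scal_cis by lra.
  f_equal. rewrite cos_minus. field. lra.
Qed.

Lemma scal_cis_neq0_pos r t : 0 <= r -> (RtoC r * cis t)%C <> 0%C -> 0 < r.
Proof.
  intros [Hr | <-] Hnz; [exact Hr|]. exfalso. apply Hnz, Cmult_0_l.
Qed.

Lemma cis_mult_scal_cis a r t : (cis a * (RtoC r * cis t))%C = (RtoC r * cis (a + t))%C.
Proof. rewrite cis_add. ring. Qed.

Lemma polar_decomposition z : (RtoC (Cmod z) * cis (arg z))%C = z.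
Proof.
  unfold arg. destruct (Req_EM_T (Cmod z) 0) as [H0 | H0].
  { rewrite H0, (Cmod_eq_0 _ H0). apply Cmult_0_l. }
  destruct z as [a b]. simpl Re; simpl Im. set (M := Cmod (a, b)) in H0 |- *.
  assert (HM : 0 < M) by (pose proof (Cmod_ge_0 (a, b)) as H; fold M in H; lra).
  assert (Hsq : M ^ 2 = a ^ 2 + b ^ 2) by apply Cmod2_alt.
  assert (Ha : -1 <= a / M <= 1).
  { apply Rabs_le_between. rewrite Rabs_div, (Rabs_pos_eq M) by lra.
    apply Rle_div_l; [lra|]. rewrite Rmult_1_l. exact (re_le_Cmod (a, b)). }
  assert (Hsin : sin (acos (a / M)) = Rabs b / M).
  { rewrite sin_acos by exact Ha.
    replace (1 - (a / M)²) with ((b / M)²)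
      by (unfold Rsqr; field_simplify; [rewrite Hsq; field | ..]; nra).
    rewrite sqrt_Rsqr_abs, Rabs_div, (Rabs_pos_eq M); lra. }
  apply injective_projections; rewrite ?Re_scal_cis, ?Im_scal_cis; simpl;
  destruct (Rle_dec 0 b) as [Hb | Hb];
  rewrite ?cos_neg, ?sin_neg, ?cos_acos, ?Hsin by exact Ha;
  rewrite ?Rabs_pos_eq, ?Rabs_left by lra; field; lra.
Qed.

Lemma arg_scal_cis r t : 0 < r -> cis (arg (RtoC r * cis t)%C) = cis t.
Proof.
  intros Hr. pose proof (polar_decomposition (RtoC r * cis t)) as E.
  rewrite Cmod_scal_cis in E by lra.
  pose proof (f_equal Re E) as Ec. pose proof (f_equal Im E) as Es.
  rewrite !Re_scal_cis in Ec. rewrite !Im_scal_cis in Es.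
  apply injective_projections; apply (Rmult_eq_reg_l r); (exact Ec || exact Es || lra).
Qed.

Lemma acos_cos_Rabs t : Rabs t <= PI -> acos (cos t) = Rabs t.
Proof.
  intros Ht. rewrite <- (acos_cos (Rabs t)) by (split; [apply Rabs_pos | exact Ht]).
  unfold Rabs. destruct (Rcase_abs t); rewrite ?cos_neg; reflexivity.
Qed.

Lemma acos_cos_cis a b : cis a = cis b -> acos (cos a) = acos (cos b).
Proof. intros E. change (acos (fst (cis a)) = acos (fst (cis b))). now rewrite E. Qed.

Definition on_grid (th t : R) : Prop := exists m : Z, t = IZR m * th.

Definition nearest_on_grid (th t c : R) : Prop :=
  on_grid th c /\ forall m : Z, Rabs (t - c) <= Rabs (t - IZR m * th).

Lemma on_grid_add th a b : on_grid th a -> on_grid th b -> on_grid th (a + b).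
Proof. intros [i ->] [j ->]. exists (i + j)%Z. rewrite plus_IZR. ring. Qed.

Lemma on_grid_opp th a : on_grid th a -> on_grid th (- a).
Proof. intros [i ->]. exists (- i)%Z. rewrite opp_IZR. ring. Qed.

Lemma on_grid_Zmult th (k : Z) a : on_grid th a -> on_grid th (IZR k * a).
Proof. intros [i ->]. exists (k * i)%Z. rewrite mult_IZR. ring. Qed.

Lemma on_grid_small th a : 0 < th -> on_grid th a -> Rabs a < th -> a = 0.
Proof.
  intros Hth [j ->] Ha. apply Rabs_def2 in Ha.
  destruct (Z_lt_le_dec j 0) as [Hj | Hj].
  - assert (IZR j <= -1) by (apply IZR_le; lia). nra.
  - destruct (Z_le_gt_dec j 0) as [Hj' | Hj'].
    + replace j with 0%Z by lia. ring.
    + assert (1 <= IZR j) by (apply IZR_le; lia). nra.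
Qed.

Lemma exists_near_grid th t : 0 < th -> exists m : Z, Rabs (t - IZR m * th) <= th / 2.
Proof.
  intros Hth. destruct (archimed (t / th - 1 / 2)) as [Hup Hup'].
  exists (up (t / th - 1 / 2)). set (q := t / th) in *. set (m := IZR (up _)) in *.
  replace t with (q * th) by (unfold q; field; lra).
  apply Rabs_le_between. split; nra.
Qed.

Lemma exists_2PI_shift t : exists k : Z, - PI <= t + IZR k * (2 * PI) <= PI.
Proof.
  destruct (exists_near_grid (2 * PI) t) as [m Hm]; [pose proof PI_RGT_0; lra|].
  exists (- m)%Z. rewrite opp_IZR. apply Rabs_le_between in Hm. lra.
Qed.

Lemma nearest_on_grid_dist th t c : 0 < th -> nearest_on_grid th t c -> Rabs (t - c) <= th / 2.
Proof.
  intros Hth [_ Hc]. destruct (exists_near_grid th t Hth) as [m Hm].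
  exact (Rle_trans _ _ _ (Hc m) Hm).
Qed.

Lemma nearest_on_grid_shift th t c g :
  nearest_on_grid th t c -> on_grid th g -> nearest_on_grid th (t + g) (c + g).
Proof.
  intros [Hc Hnear] [j ->]. split; [apply on_grid_add; [exact Hc | exists j; reflexivity]|].
  intros m. replace (t + IZR j * th - (c + IZR j * th)) with (t - c) by ring.
  replace (t + IZR j * th - IZR m * th) with (t - IZR (m - j) * th)
    by (rewrite minus_IZR; ring).
  apply Hnear.
Qed.

Lemma nearest_on_grid_opp th t c : nearest_on_grid th t c -> nearest_on_grid th (- t) (- c).
Proof.
  intros [Hc Hnear]. split; [exact (on_grid_opp _ _ Hc)|].
  intros m. specialize (Hnear (- m)%Z). rewrite opp_IZR in Hnear.
  rewrite <- Rabs_Ropp, <- (Rabs_Ropp (- t - _)).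
  replace (- (- t - - c)) with (t - c) by ring.
  replace (- (- t - IZR m * th)) with (t - - IZR m * th) by ring.
  exact Hnear.
Qed.

(* The strict bound [u < p] matters: for [u = p = m th + th/2] the nearest grid point may be
   [(m + 1) th]. *)
Lemma nearest_on_grid_between th u p c dl (m : Z) :
  0 < th -> 0 <= u < p -> p = IZR m * th + dl -> Rabs dl <= th / 2 ->
  nearest_on_grid th u c -> Rabs (c + dl) <= p.
Proof.
  intros Hth Hu Hp Hdl [[j ->] Hnear]. apply Rabs_le_between in Hdl.
  assert (Hc0 : 0 <= IZR j * th).
  { specialize (Hnear 0%Z). rewrite Rmult_0_l, Rminus_0_r, (Rabs_pos_eq u) in Hnear by lra.
    apply Rabs_le_between in Hnear. lra. }
  assert (Hjm : IZR j * th <= IZR m * th).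
  { destruct (Z_le_gt_dec j m) as [Hjm | Hmj]; [apply IZR_le in Hjm; nra | exfalso].
    assert (IZR m + 1 <= IZR j) by (rewrite <- plus_IZR; apply IZR_le; lia).
    assert (IZR m * th + th <= IZR j * th) by nra.
    specialize (Hnear m). rewrite (Rabs_left (u - IZR j * th)) in Hnear by lra.
    destruct (Rle_lt_dec (IZR m * th) u);
      [rewrite Rabs_pos_eq in Hnear | rewrite Rabs_left in Hnear]; lra. }
  apply Rabs_le_between. split; [|lra].
  destruct (Rle_lt_dec 0 dl); [lra|].
  assert (Hm : 1 <= IZR m).
  { destruct (Z_le_gt_dec 1 m) as [Hm | Hm]; [apply IZR_le; exact Hm|].
    assert (IZR m <= 0) by (apply IZR_le; lia). nra. }
  nra.
Qed.

Lemma sin_gt_0_inv t : - PI <= t <= PI -> 0 < sin t -> 0 < t < PI.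
Proof.
  intros Ht Hs. split.
  - destruct (Rle_lt_dec t 0) as [Hle | Hlt]; [exfalso | exact Hlt].
    destruct (Req_dec t (- PI)) as [-> | Hne]; [rewrite sin_neg, sin_PI in Hs; lra|].
    destruct (Req_dec t 0) as [-> | Hne0]; [rewrite sin_0 in Hs; lra|].
    pose proof (sin_lt_0_var t). lra.
  - destruct (Req_dec t PI) as [-> | Hne]; [rewrite sin_PI in Hs|]; lra.
Qed.

Lemma sum_angle_between p u W r1 r2 :
  0 < p < PI -> - PI <= u <= PI -> 0 <= W -> 0 < r1 -> 0 < r2 ->
  W * cos u = r1 * cos p + r2 -> W * sin u = r1 * sin p -> 0 < u < p.
Proof.
  intros Hp Hu HW Hr1 Hr2 Hc Hs.
  assert (Hsp : 0 < sin p) by (apply sin_gt_0; lra).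
  assert (Hu' : 0 < u < PI) by (apply sin_gt_0_inv; [exact Hu | nra]).
  assert (Hpu : W * sin (p - u) = r2 * sin p).
  { rewrite sin_minus. transitivity (sin p * (W * cos u) - cos p * (W * sin u)); [ring|].
    rewrite Hc, Hs. ring. }
  assert (0 < p - u < PI) by (apply sin_gt_0_inv; [lra | nra]).
  lra.
Qed.

Lemma sum_angle_zero u W r1 r2 :
  - PI <= u <= PI -> 0 <= W -> 0 < r1 -> 0 < r2 ->
  W * cos u = r1 + r2 -> W * sin u = 0 -> u = 0.
Proof.
  intros Hu HW Hr1 Hr2 Hc Hs.
  assert (HW2 : W * W = (r1 + r2) * (r1 + r2)).
  { rewrite <- Hc. pose proof (sin2_cos2 u) as H. unfold Rsqr in H. nra. }
  assert (Hcu : cos u = 1).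
  { assert (W = r1 + r2) as -> by nra. apply (Rmult_eq_reg_l (r1 + r2)); lra. }
  assert (Habs : Rabs u = 0).
  { rewrite <- acos_cos_Rabs, Hcu by (apply Rabs_le_between; exact Hu). apply acos_1. }
  unfold Rabs in Habs. destruct (Rcase_abs u); lra.
Qed.

Lemma rounded_sum_angle_le th p u c dl (m : Z) W r1 r2 :
  0 < th -> p = IZR m * th + dl -> Rabs dl <= th / 2 -> - PI < p < PI ->
  - PI <= u <= PI -> 0 <= W -> 0 < r1 -> 0 < r2 ->
  (RtoC W * cis u = RtoC r1 * cis p + RtoC r2)%C ->
  nearest_on_grid th u c -> Rabs (c + dl) <= Rabs p.
Proof.
  intros Hth Hp Hdl Hpr Hu HW Hr1 Hr2 Hsum Hnear.
  assert (Hc : W * cos u = r1 * cos p + r2) by (apply (f_equal Re) in Hsum; simpl in Hsum; lra).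
  assert (Hs : W * sin u = r1 * sin p) by (apply (f_equal Im) in Hsum; simpl in Hsum; lra).
  destruct (Rtotal_order p 0) as [Hneg | [Hzero | Hpos]].
  - rewrite (Rabs_left p) by exact Hneg.
    replace (c + dl) with (- (- c + - dl)) by ring. rewrite Rabs_Ropp.
    apply (nearest_on_grid_between th (- u) (- p) (- c) (- dl) (- m)).
    + exact Hth.
    + assert (0 < - u < - p); [|lra].
      apply (sum_angle_between (- p) (- u) W r1 r2); rewrite ?cos_neg, ?sin_neg; lra.
    + rewrite opp_IZR, Hp. ring.
    + rewrite Rabs_Ropp. exact Hdl.
    + apply nearest_on_grid_opp, Hnear.
  - rewrite Hzero in Hp, Hc, Hs |- *. rewrite cos_0 in Hc. rewrite sin_0 in Hs.
    assert (u = 0) as -> by (apply (sum_angle_zero u W r1 r2); lra).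
    assert (c = 0) as ->.
    { destruct Hnear as [_ Hnear]. specialize (Hnear 0%Z).
      rewrite Rmult_0_l, Rminus_0_r, Rabs_R0 in Hnear.
      apply Rabs_le_between in Hnear. lra. }
    assert (dl = 0) as ->.
    { apply (on_grid_small th); [exact Hth | | lra].
      exists (- m)%Z. rewrite opp_IZR. lra. }
    rewrite Rplus_0_r, Rabs_R0. lra.
  - rewrite (Rabs_pos_eq p) by lra.
    apply (nearest_on_grid_between th u p c dl m); try assumption.
    assert (0 < u < p) by (apply (sum_angle_between p u W r1 r2); lra). lra.
Qed.

Section RoundedRotation.

Variables (th : R) (n : Z) (rnd rang : R -> R) (lam : C).
Hypothesis th_pos : 0 < th.
Hypothesis two_PI_on_grid : 2 * PI = IZR n * th.
Hypothesis rang_nearest : angle_rounding th rang.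
Hypothesis rnd_nonneg : forall A, 0 <= A -> 0 <= rnd A.
Hypothesis lam_unit : Cmod lam = 1.

Lemma on_grid_2PI_mult (k : Z) : on_grid th (IZR k * (2 * PI)).
Proof. apply on_grid_Zmult. exists n. exact two_PI_on_grid. Qed.

Lemma rounded_angle_step_le al ga be psi om W r1 r2 :
  on_grid th ga -> on_grid th be -> cis psi = cis (al + be) ->
  (RtoC W * cis om = RtoC r1 * cis (al + ga) + RtoC r2 * cis be)%C ->
  0 <= W -> 0 < r1 -> 0 < r2 ->
  acos (cos (al + rang om - rang psi)) <= acos (cos (al + ga - be)).
Proof.
  intros Hga Hbe Hpsi Hsum HW Hr1 Hr2.
  (* [p] is built from [psi] rather than [al] so that [p - dl] lies on the grid. *)
  destruct (exists_2PI_shift (psi + ga - 2 * be)) as [k' Hp].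
  set (p := psi + ga - 2 * be + IZR k' * (2 * PI)) in Hp.
  assert (Hcis_p : cis (al + ga - be) = cis p).
  { unfold p. rewrite cis_add_2PI_mult.
    replace (psi + ga - 2 * be) with (psi + (ga - 2 * be)) by ring.
    rewrite (cis_congr_add _ _ _ Hpsi). f_equal. ring. }
  assert (Hp_abs : Rabs p <= PI) by (apply Rabs_le_between; exact Hp).
  rewrite (acos_cos_cis _ _ Hcis_p), (acos_cos_Rabs p Hp_abs).
  destruct (Req_dec (Rabs p) PI) as [Hpi | Hpi].
  { rewrite Hpi. apply acos_bound. }
  assert (Hp' : - PI < p < PI) by (unfold Rabs in Hpi; destruct (Rcase_abs p); lra).
  set (dl := psi - rang psi).
  assert (Hdl : Rabs dl <= th / 2)
    by exact (nearest_on_grid_dist th psi _ th_pos (rang_nearest psi)).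
  assert (Hp_grid : on_grid th (p - dl)).
  { replace (p - dl) with (rang psi + ga + - be + - be + IZR k' * (2 * PI))
      by (unfold p, dl; ring).
    destruct (rang_nearest psi) as [Hpsi_grid _].
    repeat apply on_grid_add; auto using on_grid_opp, on_grid_2PI_mult. }
  destruct Hp_grid as [m Hm].
  destruct (exists_2PI_shift (om - be)) as [k Hu].
  set (g := - be + IZR k * (2 * PI)).
  set (u := om + g). set (c := rang om + g).
  assert (Hu' : - PI <= u <= PI) by (unfold u, g; lra).
  assert (Hc : nearest_on_grid th u c).
  { apply nearest_on_grid_shift; [apply rang_nearest|].
    apply on_grid_add; auto using on_grid_opp, on_grid_2PI_mult. }
  assert (Hsum_u : (RtoC W * cis u = RtoC r1 * cis p + RtoC r2)%C).
  { replace u with (om - be + IZR k * (2 * PI)) by (unfold u, g; ring).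
    rewrite cis_add_2PI_mult, <- Hcis_p. exact (scal_cis_sum_rotate _ _ _ _ _ _ Hsum). }
  assert (Hbound : Rabs (c + dl) <= Rabs p).
  { apply (rounded_sum_angle_le th p u c dl m W r1 r2); try assumption. lra. }
  assert (Hcis_next : cis (al + rang om - rang psi) = cis (c + dl)).
  { replace (c + dl) with (psi + (rang om - be - rang psi) + IZR k * (2 * PI))
      by (unfold c, g, dl; ring).
    rewrite cis_add_2PI_mult, (cis_congr_add _ _ _ Hpsi). f_equal. ring. }
  rewrite (acos_cos_cis _ _ Hcis_next), acos_cos_Rabs by lra. exact Hbound.
Qed.

Local Notation round z := (polar_round rnd rang z).

Lemma lam_mult_scal_cis r t : (lam * (RtoC r * cis t))%C = (RtoC r * cis (arg lam + t))%C.
Proof.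
  rewrite <- cis_mult_scal_cis, <- (polar_decomposition lam) at 1.
  rewrite lam_unit. ring.
Qed.

Lemma vangle_round_step_le y0 z0 :
  round y0 <> 0%C -> round z0 <> 0%C ->
  round (lam * round y0 + round z0)%C <> 0%C -> round (lam * round z0)%C <> 0%C ->
  vangle (lam * round (lam * round y0 + round z0))%C (round (lam * round z0)%C)
    <= vangle (lam * round y0)%C (round z0).
Proof.
  assert (Hround : forall z, round z = (RtoC (rnd (Cmod z)) * cis (rang (arg z)))%C)
    by reflexivity.
  assert (Hpos : forall z, round z <> 0%C -> 0 < rnd (Cmod z)).
  { intros z Hz. rewrite Hround in Hz.
    exact (scal_cis_neq0_pos _ _ (rnd_nonneg _ (Cmod_ge_0 z)) Hz). }
  intros Hy Hz Hy' Hz'. apply Hpos in Hy, Hz, Hy', Hz'.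
  rewrite !Hround, !lam_mult_scal_cis in *.
  rewrite !vangle_scal_cis by assumption.
  eapply rounded_angle_step_le;
    [apply rang_nearest | apply rang_nearest | apply arg_scal_cis, Hz
    | apply polar_decomposition | apply Cmod_ge_0 | exact Hy | exact Hz].
Qed.

End RoundedRotation.

Theorem lemma13 (Rg : nat) (rnd rang : R -> R) (lam : C) (d k N : nat)
    (x : nat -> nat -> C) :
  (2 <= Rg)%nat ->
  (forall A : R, 0 <= A -> 0 <= rnd A) ->
  angle_rounding (PI / INR Rg) rang ->
  algebraic lam -> Cmod lam = 1 ->
  (2 <= k)%nat -> (k <= d)%nat ->
  (* initial vector has rounded entries *)
  (forall j : nat, (1 <= j <= d)%nat -> exists z : C, x 0%nat j = polar_round rnd rang z) ->
  (* orbit under the rounded Jordan block *)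
  (forall (i j : nat), (1 <= j < d)%nat ->
     x (S i) j = polar_round rnd rang (Cplus (Cmult lam (x i j)) (x i (S j)))) ->
  (forall i : nat, x (S i) d = polar_round rnd rang (Cmult lam (x i d))) ->
  (* dimension k is just rotating after position N *)
  (forall i : nat, (N <= i)%nat -> x (S i) k = polar_round rnd rang (Cmult lam (x i k))) ->
  (* phi(i) is defined: the relevant entries are nonzero *)
  (forall i : nat, (N + 1 <= i)%nat -> x i (k - 1)%nat <> RtoC 0 /\ x i k <> RtoC 0) ->
  forall i : nat, (N + 1 <= i)%nat ->
    vangle (Cmult lam (x i (k - 1)%nat)) (x i k) >=
    vangle (Cmult lam (x (S i) (k - 1)%nat)) (x (S i) k).
Proof.
  intros HRg Hrnd Hrang _ Hlam Hk2 Hkd _ Hstep _ Hrot Hnz i Hi.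
  destruct i as [|i]; [lia|].
  assert (Hprev : forall j, x (S j) (k - 1)%nat =
                            polar_round rnd rang (Cplus (Cmult lam (x j (k - 1)%nat)) (x j k))).
  { intros j. rewrite Hstep by lia. do 3 f_equal. lia. }
  destruct (Hnz (S i)) as [Hy Hz]; [lia|].
  destruct (Hnz (S (S i))) as [Hy' Hz']; [lia|].
  rewrite (Hprev (S i)) in Hy' |- *. rewrite (Hrot (S i)) in Hz' |- * by lia.
  rewrite (Hprev i) in Hy, Hy' |- *. rewrite (Hrot i) in Hz, Hy', Hz' |- * by lia.
  apply Rle_ge, (vangle_round_step_le (PI / INR Rg) (2 * Z.of_nat Rg)); try assumption.
  - apply Rdiv_lt_0_compat; [exact PI_RGT_0 | apply lt_0_INR; lia].
  - rewrite mult_IZR, <- INR_IZR_INZ. field. apply not_0_INR. lia.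
Qed.
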